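(* Let $a<b$ and $\ell_3>0$, and let $U(y,z)$ be a smooth real-valued function on $[a,b]\times\mathbb{R}$, $\ell_3$-periodic in $z$, satisfying $U_y=0$ at $y=a$ and at $y=b$. Let $A=\max_{y,z}|\nabla U|$ and $B=\max_{y,z}|\Delta U|$. Suppose $k\neq 0$ is real, $c=c_r+ic_i$ is complex with $c_i>0$, and there are smooth functions $u,v,w,p$ on $[a,b]\times\mathbb{R}$, $\ell_3$-periodic in $z$, not all identically zero, such that \[ ik(U-c)u+vU_y+wU_z=-ikp,\quad ik(U-c)v=-p_y,\quad ik(U-c)w=-p_z,\quad iku+v_y+w_z=0, \] with $v(a,z)=v(b,z)=0$ for all $z$. Then \[ (kc_i)^2\le 2A^2+Bc_i, \] equivalently $\left(kc_i-\frac{B}{2k}\right)^2\le 2A^2+\left(\frac{B}{2k}\right)^2$.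
   Context: Here $\nabla=(\partial_y,\partial_z)$ and $\Delta=\partial_y^2+\partial_z^2$. The system is the linearization of the 3D Euler equations in the channel $a\le y\le b$ (slip boundary condition, periodic in $x$ and $z$) about the steady shear $(U(y,z),0,0)$ with constant pressure, for perturbations of the form $e^{ik(x-ct)}(u,v,w,p)(y,z)+\text{c.c.}$; such $c$ is called an unstable eigenvalue with wave number $k$. *)

From Stdlib Require Import Reals.
From Coquelicot Require Import Coquelicot.
Open Scope R_scope.

Definition cont2 {V : NormedModule R_AbsRing} (f : R -> R -> V) : Prop :=
  forall y z : R,
    filterlim (fun q : R * R => f (fst q) (snd q)) (locally (y, z)) (locally (f y z)).

Fixpoint Ck {V : NormedModule R_AbsRing} (n : nat) (f : R -> R -> V) : Prop :=
  cont2 f /\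
  match n with
  | O => True
  | S m => exists fy fz : R -> R -> V,
      (forall y z, is_derive (fun t => f t z) y (fy y z)) /\
      (forall y z, is_derive (fun t => f y t) z (fz y z)) /\
      Ck m fy /\ Ck m fz
  end.

Definition smooth2 {V : NormedModule R_AbsRing} (f : R -> R -> V) : Prop :=
  forall n, Ck n f.

Definition dy (f : R -> R -> R) (y z : R) : R := Derive (fun t => f t z) y.
Definition dz (f : R -> R -> R) (y z : R) : R := Derive (fun t => f y t) z.
Definition lap (f : R -> R -> R) (y z : R) : R := dy (dy f) y z + dz (dz f) y z.

Definition dyC (f : R -> R -> C) (y z : R) : C :=
  (Derive (fun t => Re (f t z)) y, Derive (fun t => Im (f t z)) y).
Definition dzC (f : R -> R -> C) (y z : R) : C :=
  (Derive (fun t => Re (f y t)) z, Derive (fun t => Im (f y t)) z).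

Definition zperiodic {T : Type} (a b l : R) (f : R -> R -> T) : Prop :=
  forall y z, a <= y <= b -> f y (z + l) = f y z.

Definition is_max_strip (a b : R) (F : R -> R -> R) (M : R) : Prop :=
  (forall y z, a <= y <= b -> F y z <= M) /\
  (exists y z, a <= y <= b /\ F y z = M).

From Stdlib Require Import Reals Lra Psatz.
From Coquelicot Require Import Coquelicot.
Open Scope R_scope.

(* The real flux (Re (p conj v), Re (p conj w)) of an eigenmode has divergence
   -k c_i (|u|^2 + |v|^2 + |w|^2) - Re (conj u (v U_y + w U_z)), and the coupling term is
   at most (A/2) (|u|^2 + |v|^2 + |w|^2) in absolute value.  Integrating in y, the wall
   terms vanish because v = 0 at y = a, b, so the y-integral of the divergence is the
   z-derivative of the z-periodic function z |-> int_a^b Re (p conj w) dy.  If |k| c_i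
   exceeded A/2 this derivative would have a strict sign at some z and a weak sign
   everywhere, which periodicity forbids.  Hence |k c_i| <= A/2, which is stronger than
   the claim: (k c_i)^2 <= A^2/4 <= 2 A^2 + B c_i. *)

Definition continuous2 (f : R -> R -> R) : Prop :=
  forall y z, continuity_2d_pt f y z.

(* The real inner product of C = R^2, i.e. [Re (x * conj y)]. *)
Definition Cdot (x y : C) : R := Re x * Re y + Im x * Im y.

Lemma continuous2_Re (f : R -> R -> C) : cont2 f -> continuous2 (fun y z => Re (f y z)).
Proof.
  intros Hf y z. apply continuity_2d_pt_filterlim.
  eapply filterlim_comp; [apply Hf|].
  destruct (f y z). apply continuous_fst.
Qed.

Lemma continuous2_Im (f : R -> R -> C) : cont2 f -> continuous2 (fun y z => Im (f y z)).
Proof.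
  intros Hf y z. apply continuity_2d_pt_filterlim.
  eapply filterlim_comp; [apply Hf|].
  destruct (f y z). apply continuous_snd.
Qed.

Lemma continuous2_Cdot (f g : R -> R -> C) :
  cont2 f -> cont2 g -> continuous2 (fun y z => Cdot (f y z) (g y z)).
Proof.
  intros Hf Hg y z. unfold Cdot.
  apply continuity_2d_pt_plus; apply continuity_2d_pt_mult;
    (apply continuous2_Re || apply continuous2_Im); assumption.
Qed.

Lemma continuous2_plus (f g : R -> R -> R) :
  continuous2 f -> continuous2 g -> continuous2 (fun y z => f y z + g y z).
Proof. intros Hf Hg y z. apply continuity_2d_pt_plus; auto. Qed.

Lemma continuous2_opp (f : R -> R -> R) :
  continuous2 f -> continuous2 (fun y z => - f y z).
Proof. intros Hf y z. apply continuity_2d_pt_opp; auto. Qed.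

Lemma continuous2_swap (f : R -> R -> R) :
  continuous2 f -> continuous2 (fun y z => f z y).
Proof.
  intros Hf y z eps. destruct (Hf z y eps) as [d Hd].
  exists d. intros s t Hs Ht. apply Hd; assumption.
Qed.

Lemma continuous2_continuous_l (f : R -> R -> R) y z :
  continuous2 f -> continuous (fun t => f t z) y.
Proof.
  intros Hf. apply filterlim_locally. intros eps.
  destruct (Hf y z eps) as [d Hd]. exists d. intros t Ht.
  apply Hd; [exact Ht|]. rewrite Rminus_eq_0, Rabs_R0. apply cond_pos.
Qed.

Lemma ex_RInt_continuous2 (f : R -> R -> R) a b z :
  continuous2 f -> ex_RInt (fun y => f y z) a b.
Proof.
  intros Hf. apply (@ex_RInt_continuous R_CompleteNormedModule).
  intros t _. apply continuous2_continuous_l, Hf.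
Qed.

Lemma is_derive_Re (g : R -> C) x l :
  is_derive g x l -> is_derive (fun t => Re (g t)) x (Re l).
Proof.
  intros Hg. apply (filterdiff_ext_lin _ (fun h : R => Re (scal h l))); [|reflexivity].
  apply (filterdiff_comp' g Re x (fun h => scal h l) Re); [exact Hg|].
  apply filterdiff_linear, is_linear_fst.
Qed.

Lemma is_derive_Im (g : R -> C) x l :
  is_derive g x l -> is_derive (fun t => Im (g t)) x (Im l).
Proof.
  intros Hg. apply (filterdiff_ext_lin _ (fun h : R => Im (scal h l))); [|reflexivity].
  apply (filterdiff_comp' g Im x (fun h => scal h l) Im); [exact Hg|].
  apply filterdiff_linear, is_linear_snd.
Qed.

Lemma is_derive_Cdot (f g : R -> C) x df dg :
  is_derive f x df -> is_derive g x dg ->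
  is_derive (fun t => Cdot (f t) (g t)) x (Cdot df (g x) + Cdot (f x) dg).
Proof.
  intros Hf Hg. unfold Cdot.
  replace (Re df * Re (g x) + Im df * Im (g x) + (Re (f x) * Re dg + Im (f x) * Im dg))
    with ((Re df * Re (g x) + Re (f x) * Re dg) + (Im df * Im (g x) + Im (f x) * Im dg))
    by ring.
  apply (is_derive_plus (fun t => Re (f t) * Re (g t)) (fun t => Im (f t) * Im (g t)));
    [apply (is_derive_mult (fun t => Re (f t)) (fun t => Re (g t)))
    |apply (is_derive_mult (fun t => Im (f t)) (fun t => Im (g t)))];
    try apply Rmult_comm; (apply is_derive_Re || apply is_derive_Im); assumption.
Qed.

Lemma dyC_is_derive (f fy : R -> R -> C) y z :
  is_derive (fun t => f t z) y (fy y z) -> dyC f y z = fy y z.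
Proof.
  intros H. apply injective_projections; apply is_derive_unique;
    [apply (is_derive_Re (fun t => f t z)) | apply (is_derive_Im (fun t => f t z))];
    exact H.
Qed.

Lemma dzC_is_derive (f fz : R -> R -> C) y z :
  is_derive (fun t => f y t) z (fz y z) -> dzC f y z = fz y z.
Proof.
  intros H. apply injective_projections; apply is_derive_unique;
    [apply (is_derive_Re (fun t => f y t)) | apply (is_derive_Im (fun t => f y t))];
    exact H.
Qed.

Lemma RInt_gt_0_pt (g : R -> R) a b y0 :
  a < b -> a <= y0 <= b -> (forall y, continuous g y) ->
  (forall y, a <= y <= b -> 0 <= g y) -> 0 < g y0 -> 0 < RInt g a b.
Proof.
  intros Hab Hy0 Hc Hnn Hpos.
  assert (Hhalf : 0 < g y0 / 2) by lra.
  destruct (proj1 (filterlim_locally g (g y0)) (Hc y0) (mkposreal _ Hhalf)) as [d Hd].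
  pose proof (cond_pos d) as Hd0.
  set (c := Rmax a (y0 - d / 2)). set (e := Rmin b (y0 + d / 2)).
  assert (Hac : a <= c) by apply Rmax_l.
  assert (Heb : e <= b) by apply Rmin_l.
  assert (Hce : c < e) by (unfold c, e; apply Rmax_case; apply Rmin_case; lra).
  assert (Hex : forall x y, ex_RInt g x y)
    by (intros; apply (@ex_RInt_continuous R_CompleteNormedModule); auto).
  rewrite <- (RInt_Chasles g a c b), <- (RInt_Chasles g c e b) by auto.
  assert (Hl : 0 <= RInt g a c).
  { apply RInt_ge_0; auto. intros x Hx. apply Hnn.
    unfold c in Hx; revert Hx; apply Rmax_case; lra. }
  assert (Hr : 0 <= RInt g e b).
  { apply RInt_ge_0; auto. intros x Hx. apply Hnn.
    unfold e in Hx; revert Hx; apply Rmin_case; lra. }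
  assert (Hm : 0 < RInt g c e).
  { apply RInt_gt_0; auto. intros x Hx.
    assert (Hball : ball y0 d x).
    { assert (y0 - d / 2 <= c) by apply Rmax_r. assert (e <= y0 + d / 2) by apply Rmin_r.
      change (Rabs (x - y0) < d). apply Rabs_def1; lra. }
    specialize (Hd x Hball). change (Rabs (g x - g y0) < g y0 / 2) in Hd.
    apply Rabs_def2 in Hd. lra. }
  change (0 < RInt g a c + (RInt g c e + RInt g e b)). lra.
Qed.

Lemma derive_nonpos_nonincreasing (f df : R -> R) :
  (forall z, is_derive f z (df z)) -> (forall z, df z <= 0) ->
  forall x y, x <= y -> f y <= f x.
Proof.
  intros Hd Hn x y Hxy.
  destruct (MVT_gen f x y df) as [t [_ Ht]].
  - intros; apply Hd.
  - intros t _. apply continuity_pt_filterlim, (@ex_derive_continuous R_AbsRing R_NormedModule).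
    eexists; apply Hd.
  - specialize (Hn t). nra.
Qed.

Lemma periodic_derive_nonpos_eq0 (f df : R -> R) (l : R) :
  0 < l -> (forall z, is_derive f z (df z)) -> (forall z, df z <= 0) ->
  (forall z, f (z + l) = f z) -> forall z, df z = 0.
Proof.
  intros Hl Hd Hn Hper z.
  pose proof (derive_nonpos_nonincreasing f df Hd Hn) as Hmono.
  assert (Hconst : locally z (fun t => f z = f t)).
  { exists (mkposreal l Hl). intros t Ht.
    change (Rabs (t - z) < l) in Ht. apply Rabs_def2 in Ht.
    destruct (Rle_or_lt z t).
    - assert (f t <= f z) by (apply Hmono; lra).
      assert (f (z + l) <= f t) by (apply Hmono; lra).
      rewrite Hper in *. lra.
    - pose proof (Hper (z - l)) as Hzl. replace (z - l + l) with z in Hzl by ring.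
      assert (f z <= f t) by (apply Hmono; lra).
      assert (f t <= f (z - l)) by (apply Hmono; lra).
      lra. }
  rewrite <- (is_derive_unique _ _ _ (Hd z)). apply is_derive_unique.
  apply (is_derive_ext_loc (fun _ => f z)); [exact Hconst | apply (is_derive_const (f z) z)].
Qed.

Section StripFlux.

Variables (a b l : R) (F Fy G Gz : R -> R -> R).
Hypotheses (Hab : a < b) (Hl : 0 < l).
Hypotheses (cFy : continuous2 Fy) (cG : continuous2 G) (cGz : continuous2 Gz).
Hypothesis dF : forall y z, is_derive (fun t => F t z) y (Fy y z).
Hypothesis dG : forall y z, is_derive (fun t => G y t) z (Gz y z).
Hypotheses (Fa : forall z, F a z = 0) (Fb : forall z, F b z = 0).
Hypothesis Gper : forall y z, a <= y <= b -> G y (z + l) = G y z.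

Lemma RInt_Fy_eq0 z : RInt (fun y => Fy y z) a b = 0.
Proof.
  apply is_RInt_unique.
  replace 0 with (minus (F b z) (F a z)) by (rewrite Fa, Fb; compute; ring).
  apply (is_RInt_derive (fun t => F t z)); intros.
  - apply dF.
  - apply continuous2_continuous_l, cFy.
Qed.

Lemma is_derive_RInt_flux z :
  is_derive (fun z => RInt (fun y => G y z) a b) z (RInt (fun y => Fy y z + Gz y z) a b).
Proof.
  assert (Hsum : RInt (fun y => Fy y z + Gz y z) a b
                 = RInt (fun y => Fy y z) a b + RInt (fun y => Gz y z) a b)
    by (apply (RInt_plus (V := R_CompleteNormedModule)); apply ex_RInt_continuous2; assumption).
  rewrite Hsum, RInt_Fy_eq0, Rplus_0_l.
  replace (RInt (fun y => Gz y z) a b) with (RInt (fun y => Derive (fun t => G y t) z) a b)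
    by (apply RInt_ext; intros y _; apply is_derive_unique, dG).
  apply (is_derive_RInt_param (fun z y => G y z)).
  - apply filter_forall. intros s t _. eexists; apply dG.
  - intros t _. apply continuity_2d_pt_ext with (fun s t => Gz t s).
    + intros s t'. symmetry. apply is_derive_unique, dG.
    + apply continuous2_swap, cGz.
  - apply filter_forall. intros s. apply ex_RInt_continuous2, cG.
Qed.

Lemma RInt_flux_nonpos_eq0 :
  (forall z, RInt (fun y => Fy y z + Gz y z) a b <= 0) ->
  forall z, RInt (fun y => Fy y z + Gz y z) a b = 0.
Proof.
  intros Hn. apply (periodic_derive_nonpos_eq0 _ _ l Hl is_derive_RInt_flux Hn).
  intros z. apply RInt_ext. intros y Hy.
  rewrite Rmin_left, Rmax_right in Hy by lra. apply Gper. lra.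
Qed.

End StripFlux.

Lemma flux_decay_rate_nonpos (a b l : R) (F Fy G Gz Q : R -> R -> R) (K : R) :
  a < b -> 0 < l ->
  continuous2 Fy -> continuous2 G -> continuous2 Gz -> continuous2 Q ->
  (forall y z, is_derive (fun t => F t z) y (Fy y z)) ->
  (forall y z, is_derive (fun t => G y t) z (Gz y z)) ->
  (forall z, F a z = 0) -> (forall z, F b z = 0) ->
  (forall y z, a <= y <= b -> G y (z + l) = G y z) ->
  (forall y z, a <= y <= b -> 0 <= Q y z) ->
  (exists y0 z0, a <= y0 <= b /\ 0 < Q y0 z0) ->
  (forall y z, a <= y <= b -> Fy y z + Gz y z <= - K * Q y z) ->
  K <= 0.
Proof.
  intros Hab Hl cFy cG cGz cQ dF dG Fa Fb Gper HQ [y0 [z0 [Hy0 HQ0]]] Hdiv.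
  destruct (Rle_or_lt K 0) as [|HK]; [assumption | exfalso].
  assert (Hle : forall z,
    RInt (fun y => Fy y z + Gz y z) a b <= - K * RInt (fun y => Q y z) a b).
  { intros z.
    rewrite <- (RInt_scal (V := R_CompleteNormedModule)) by (apply ex_RInt_continuous2, cQ).
    apply RInt_le.
    - lra.
    - apply (ex_RInt_continuous2 (fun y z => Fy y z + Gz y z)), continuous2_plus; assumption.
    - apply (ex_RInt_scal (V := R_CompleteNormedModule)), ex_RInt_continuous2, cQ.
    - intros y Hy. apply Hdiv. lra. }
  assert (HQint : forall z, 0 <= RInt (fun y => Q y z) a b).
  { intros z. apply RInt_ge_0; [lra | apply ex_RInt_continuous2, cQ |].
    intros y Hy. apply HQ. lra. }
  assert (HQpos : 0 < RInt (fun y => Q y z0) a b).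
  { apply (RInt_gt_0_pt _ a b y0); auto.
    intros y. apply continuous2_continuous_l, cQ. }
  assert (Hzero : RInt (fun y => Fy y z0 + Gz y z0) a b = 0).
  { apply (RInt_flux_nonpos_eq0 a b l F Fy G Gz); auto.
    intros z. specialize (Hle z). specialize (HQint z). nra. }
  specialize (Hle z0). nra.
Qed.

Lemma flux_balance_bound (a b l : R) (F Fy G Gz Q E : R -> R -> R) (kappa M : R) :
  a < b -> 0 < l ->
  continuous2 Fy -> continuous2 G -> continuous2 Gz -> continuous2 Q ->
  (forall y z, is_derive (fun t => F t z) y (Fy y z)) ->
  (forall y z, is_derive (fun t => G y t) z (Gz y z)) ->
  (forall z, F a z = 0) -> (forall z, F b z = 0) ->
  (forall y z, a <= y <= b -> G y (z + l) = G y z) ->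
  (forall y z, a <= y <= b -> 0 <= Q y z) ->
  (exists y0 z0, a <= y0 <= b /\ 0 < Q y0 z0) ->
  (forall y z, a <= y <= b -> Fy y z + Gz y z = - kappa * Q y z - E y z) ->
  (forall y z, a <= y <= b -> Rabs (E y z) <= M * Q y z) ->
  Rabs kappa <= M.
Proof.
  intros Hab Hl cFy cG cGz cQ dF dG Fa Fb Gper HQ HQpos Hbal HE.
  apply Rabs_le. split.
  - enough (- kappa - M <= 0) by lra.
    apply (flux_decay_rate_nonpos a b l (fun y z => - F y z) (fun y z => - Fy y z)
             (fun y z => - G y z) (fun y z => - Gz y z) Q);
      auto using continuous2_opp.
    + intros y z. apply (is_derive_opp (fun t => F t z)), dF.
    + intros y z. apply (is_derive_opp (fun t => G y t)), dG.
    + intros z. rewrite Fa. ring.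
    + intros z. rewrite Fb. ring.
    + intros y z Hy. rewrite Gper by exact Hy. reflexivity.
    + intros y z Hy. specialize (Hbal y z Hy). specialize (HE y z Hy). apply Rabs_le_between in HE. lra.
  - enough (kappa - M <= 0) by lra.
    apply (flux_decay_rate_nonpos a b l F Fy G Gz Q); auto.
    intros y z Hy. specialize (Hbal y z Hy). specialize (HE y z Hy). apply Rabs_le_between in HE. lra.
Qed.

Lemma Cdot_self_ge0 (x : C) : 0 <= Cdot x x.
Proof. destruct x as [xr xi]. unfold Cdot, Re, Im; simpl. nra. Qed.

Lemma Cdot_sqr_le (x y : C) : Cdot x y ^ 2 <= Cdot x x * Cdot y y.
Proof.
  destruct x as [xr xi], y as [yr yi]. unfold Cdot, Re, Im; simpl.
  pose proof (pow2_ge_0 (xr * yi - xi * yr)). nra.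
Qed.

Lemma shear_coupling_bound (A Uy Uz : R) (u v w : C) :
  sqrt (Uy ^ 2 + Uz ^ 2) <= A ->
  Rabs (Uy * Cdot u v + Uz * Cdot u w) <= A / 2 * (Cdot u u + Cdot v v + Cdot w w).
Proof.
  intros HA.
  pose proof (sqrt_pos (Uy ^ 2 + Uz ^ 2)) as Hs.
  assert (HU : Uy ^ 2 + Uz ^ 2 <= A ^ 2).
  { rewrite <- (sqrt_sqrt (Uy ^ 2 + Uz ^ 2)) by nra. nra. }
  pose proof (Cdot_self_ge0 u). pose proof (Cdot_self_ge0 v). pose proof (Cdot_self_ge0 w).
  pose proof (Cdot_sqr_le u v). pose proof (Cdot_sqr_le u w).
  assert (Hcs : (Uy * Cdot u v + Uz * Cdot u w) ^ 2
                <= (Uy ^ 2 + Uz ^ 2) * (Cdot u v ^ 2 + Cdot u w ^ 2)).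
  { pose proof (pow2_ge_0 (Uy * Cdot u w - Uz * Cdot u v)). nra. }
  assert (Hamgm : A ^ 2 * (Cdot u u * (Cdot v v + Cdot w w))
                  <= (A / 2 * (Cdot u u + Cdot v v + Cdot w w)) ^ 2).
  { pose proof (pow2_ge_0 (A * (Cdot u u - Cdot v v - Cdot w w))). nra. }
  rewrite <- (Rabs_pos_eq (A / 2 * _)) by nra.
  apply Rsqr_le_abs_0. unfold Rsqr. nra.
Qed.

Lemma eigenmode_energy_identity (k Ux Uy Uz : R) (c u v w p py pz vy wz : C) :
  k <> 0 ->
  (Ci * RtoC k * (RtoC Ux - c) * u + v * RtoC Uy + w * RtoC Uz = - (Ci * RtoC k * p))%C ->
  (Ci * RtoC k * (RtoC Ux - c) * v = - py)%C ->
  (Ci * RtoC k * (RtoC Ux - c) * w = - pz)%C ->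
  (Ci * RtoC k * u + vy + wz = RtoC 0)%C ->
  Cdot py v + Cdot p vy + (Cdot pz w + Cdot p wz)
  = - (k * Im c) * (Cdot u u + Cdot v v + Cdot w w) - (Uy * Cdot u v + Uz * Cdot u w).
Proof.
  destruct c as [cr ci], u as [ur ui], v as [vr vi], w as [wr wi], p as [pr pi],
    py as [pyr pyi], pz as [pzr pzi], vy as [vyr vyi], wz as [wzr wzi].
  intros Hk E1 E2 E3 E4.
  injection E1 as E1r E1i. injection E2 as E2r E2i.
  injection E3 as E3r E3i. injection E4 as E4r E4i.
  unfold Cdot, Re, Im; simpl in *.
  (* The first equation determines p only through k p, hence the division. *)
  assert (Hpr : pr = - (k * ci * ui + k * (Ux - cr) * ur + vi * Uy + wi * Uz) / k).
  { apply (Rmult_eq_reg_l k); [field_simplify; [lra | exact Hk] | exact Hk]. }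
  assert (Hpi : pi = (k * ci * ur - k * (Ux - cr) * ui + vr * Uy + wr * Uz) / k).
  { apply (Rmult_eq_reg_l k); [field_simplify; [lra | exact Hk] | exact Hk]. }
  replace pyr with (- (k * ci * vr - k * (Ux - cr) * vi)) by lra.
  replace pyi with (- (k * ci * vi + k * (Ux - cr) * vr)) by lra.
  replace pzr with (- (k * ci * wr - k * (Ux - cr) * wi)) by lra.
  replace pzi with (- (k * ci * wi + k * (Ux - cr) * wr)) by lra.
  replace vyr with (k * ui - wzr) by lra.
  replace vyi with (- k * ur - wzi) by lra.
  rewrite Hpr, Hpi. field. exact Hk.
Qed.

Lemma eigenmode_energy_pos (k Ux Uy Uz : R) (c u v w p : C) :
  k <> 0 ->
  (Ci * RtoC k * (RtoC Ux - c) * u + v * RtoC Uy + w * RtoC Uz = - (Ci * RtoC k * p))%C ->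
  (u <> RtoC 0 \/ v <> RtoC 0 \/ w <> RtoC 0 \/ p <> RtoC 0) ->
  0 < Cdot u u + Cdot v v + Cdot w w.
Proof.
  destruct c as [cr ci], u as [ur ui], v as [vr vi], w as [wr wi], p as [pr pi].
  unfold Cdot, Re, Im; simpl. intros Hk E Hnz.
  destruct (Rlt_or_le 0 (ur * ur + ui * ui + (vr * vr + vi * vi) + (wr * wr + wi * wi)))
    as [|Hle]; [assumption | exfalso].
  assert (ur = 0) by nra. assert (ui = 0) by nra. assert (vr = 0) by nra.
  assert (vi = 0) by nra. assert (wr = 0) by nra. assert (wi = 0) by nra. subst.
  injection E as Er Ei.
  assert (pr = 0) by (apply (Rmult_eq_reg_l k); [lra | exact Hk]).
  assert (pi = 0) by (apply (Rmult_eq_reg_l k); [lra | exact Hk]).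
  subst. destruct Hnz as [H | [H | [H | H]]]; apply H; reflexivity.
Qed.

Lemma eigenmode_growth_rate_bound (a b l3 : R) (U : R -> R -> R) (A k : R) (c : C)
    (u v w p vy wz py pz : R -> R -> C) :
  a < b -> 0 < l3 -> k <> 0 ->
  (forall y z, a <= y <= b -> sqrt (dy U y z ^ 2 + dz U y z ^ 2) <= A) ->
  cont2 u -> cont2 v -> cont2 w -> cont2 p ->
  cont2 vy -> cont2 wz -> cont2 py -> cont2 pz ->
  (forall y z, is_derive (fun t => v t z) y (vy y z)) ->
  (forall y z, is_derive (fun t => w y t) z (wz y z)) ->
  (forall y z, is_derive (fun t => p t z) y (py y z)) ->
  (forall y z, is_derive (fun t => p y t) z (pz y z)) ->
  zperiodic a b l3 w -> zperiodic a b l3 p ->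
  (exists y z, a <= y <= b /\
     (u y z <> RtoC 0 \/ v y z <> RtoC 0 \/ w y z <> RtoC 0 \/ p y z <> RtoC 0)) ->
  (forall y z, a <= y <= b ->
     (Ci * RtoC k * (RtoC (U y z) - c) * u y z
        + v y z * RtoC (dy U y z) + w y z * RtoC (dz U y z)
      = - (Ci * RtoC k * p y z))%C) ->
  (forall y z, a <= y <= b ->
     (Ci * RtoC k * (RtoC (U y z) - c) * v y z = - dyC p y z)%C) ->
  (forall y z, a <= y <= b ->
     (Ci * RtoC k * (RtoC (U y z) - c) * w y z = - dzC p y z)%C) ->
  (forall y z, a <= y <= b ->
     (Ci * RtoC k * u y z + dyC v y z + dzC w y z = RtoC 0)%C) ->
  (forall z, v a z = RtoC 0) -> (forall z, v b z = RtoC 0) ->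
  Rabs (k * Im c) <= A / 2.
Proof.
  intros Hab Hl Hk HA cu cv cw cp cvy cwz cpy cpz dv dw dpy dpz Hwper Hpper
    [y0 [z0 [Hy0 Hnz]]] E1 E2 E3 E4 Hva Hvb.
  apply (flux_balance_bound a b l3
    (fun y z => Cdot (p y z) (v y z))
    (fun y z => Cdot (py y z) (v y z) + Cdot (p y z) (vy y z))
    (fun y z => Cdot (p y z) (w y z))
    (fun y z => Cdot (pz y z) (w y z) + Cdot (p y z) (wz y z))
    (fun y z => Cdot (u y z) (u y z) + Cdot (v y z) (v y z) + Cdot (w y z) (w y z))
    (fun y z => dy U y z * Cdot (u y z) (v y z) + dz U y z * Cdot (u y z) (w y z)));
    try assumption.
  1-4: repeat ((apply continuous2_Cdot; assumption) || apply continuous2_plus).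
  - intros y z. apply (is_derive_Cdot (fun t => p t z) (fun t => v t z) y (py y z) (vy y z)); auto.
  - intros y z. apply (is_derive_Cdot (fun t => p y t) (fun t => w y t) z (pz y z) (wz y z)); auto.
  - intros z. rewrite Hva. unfold Cdot, Re, Im; simpl. ring.
  - intros z. rewrite Hvb. unfold Cdot, Re, Im; simpl. ring.
  - intros y z Hy. rewrite Hpper, Hwper by exact Hy. reflexivity.
  - intros y z _. pose proof (Cdot_self_ge0 (u y z)).
    pose proof (Cdot_self_ge0 (v y z)). pose proof (Cdot_self_ge0 (w y z)). lra.
  - exists y0, z0. split; [exact Hy0|]. apply (eigenmode_energy_pos k (U y0 z0)
      (dy U y0 z0) (dz U y0 z0) c _ _ _ (p y0 z0) Hk (E1 y0 z0 Hy0) Hnz).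
  - intros y z Hy. apply (eigenmode_energy_identity k (U y z)); [exact Hk | apply E1; exact Hy
      | rewrite <- (dyC_is_derive p py); auto
      | rewrite <- (dzC_is_derive p pz); auto
      | rewrite <- (dyC_is_derive v vy), <- (dzC_is_derive w wz); auto].
  - intros y z Hy. apply shear_coupling_bound, HA, Hy.
Qed.

Theorem theorem3 (a b l3 : R) (U : R -> R -> R) (A B k : R) (c : C)
    (u v w p : R -> R -> C) :
  a < b -> 0 < l3 ->
  smooth2 U -> zperiodic a b l3 U ->
  (forall z, dy U a z = 0) -> (forall z, dy U b z = 0) ->
  is_max_strip a b (fun y z => sqrt (dy U y z ^ 2 + dz U y z ^ 2)) A ->
  is_max_strip a b (fun y z => Rabs (lap U y z)) B ->
  k <> 0 -> 0 < Im c ->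
  smooth2 u -> smooth2 v -> smooth2 w -> smooth2 p ->
  zperiodic a b l3 u -> zperiodic a b l3 v ->
  zperiodic a b l3 w -> zperiodic a b l3 p ->
  (exists y z, a <= y <= b /\
     (u y z <> RtoC 0 \/ v y z <> RtoC 0 \/ w y z <> RtoC 0 \/ p y z <> RtoC 0)) ->
  (forall y z, a <= y <= b ->
     (Ci * RtoC k * (RtoC (U y z) - c) * u y z
        + v y z * RtoC (dy U y z) + w y z * RtoC (dz U y z)
      = - (Ci * RtoC k * p y z))%C) ->
  (forall y z, a <= y <= b ->
     (Ci * RtoC k * (RtoC (U y z) - c) * v y z = - dyC p y z)%C) ->
  (forall y z, a <= y <= b ->
     (Ci * RtoC k * (RtoC (U y z) - c) * w y z = - dzC p y z)%C) ->
  (forall y z, a <= y <= b ->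
     (Ci * RtoC k * u y z + dyC v y z + dzC w y z = RtoC 0)%C) ->
  (forall z, v a z = RtoC 0) -> (forall z, v b z = RtoC 0) ->
  (k * Im c) ^ 2 <= 2 * A ^ 2 + B * Im c.
Proof.
  intros Hab Hl _ _ _ _ [HA _] [_ [yB [zB [_ HB]]]] Hk Hci Hu Hv Hw Hp _ _ Hwper Hpper
    Hnz E1 E2 E3 E4 Hva Hvb.
  destruct (Hu 1%nat) as [cu _].
  destruct (Hv 1%nat) as [cv [vy [_ [dv [_ [[cvy _] _]]]]]].
  destruct (Hw 1%nat) as [cw [_ [wz [_ [dw [_ [cwz _]]]]]]].
  destruct (Hp 1%nat) as [cp [py [pz [dpy [dpz [[cpy _] [cpz _]]]]]]].
  assert (Hgrowth : Rabs (k * Im c) <= A / 2)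
    by (apply (eigenmode_growth_rate_bound a b l3 U A k c u v w p vy wz py pz); assumption).
  assert (HB0 : 0 <= B) by (rewrite <- HB; apply Rabs_pos).
  pose proof (Rabs_pos (k * Im c)).
  rewrite <- pow2_abs. nra.
Qed.
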